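(* Let $I \subset \mathbb{R}$ be an interval (open or closed), let $d$ be an orderly metric on $\mathbb{R}$, and let $f \colon (I,d) \to (\mathbb{R},d)$ be an $(M,\epsilon)$-quasi-isometric embedding. Then $f$ is $2\epsilon M$-monotone relative to $d$, and for all $a,b \in I$ the set $f([a,b])$ is $\epsilon$-dense in $[f(a),f(b)]$, i.e. $\inf_{x \in [a,b]} d(y,f(x)) \leq \epsilon$ for every $y \in [f(a),f(b)]$.
   Context: A map $f \colon (X,d) \to (Y,d')$ is an $(M,\epsilon)$-quasi-isometric embedding if $M^{-1}d(x,y) - \epsilon \leq d'(f(x),f(y)) \leq Md(x,y) + \epsilon$ for all $x,y \in X$. A metric $d$ on $\mathbb{R}$ is orderly if the identity $(\mathbb{R},|\cdot|) \to (\mathbb{R},d)$ is continuous and $\max\{d(x,y),d(y,z)\} \leq d(x,z)$ whenever $x \leq y \leq z$. For $E \subset \mathbb{R}$ and $\delta > 0$, a map $f \colon E \to \mathbb{R}$ is $\delta$-monotone relative to $d$ if either $f(a) < f(b)$ for all $a,b \in E$ with $a < b$ and $d(a,b) > \delta$, or $f(a) > f(b)$ for all such $a,b$. Here $[u,v] = \{x : u \leq x \leq v\}$. *)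

From Stdlib Require Import Reals.
Open Scope R_scope.

Definition is_metric (d : R -> R -> R) : Prop :=
  (forall x y, 0 <= d x y) /\
  (forall x y, d x y = 0 <-> x = y) /\
  (forall x y, d x y = d y x) /\
  (forall x y z, d x z <= d x y + d y z).

Definition orderly (d : R -> R -> R) : Prop :=
  is_metric d /\
  (forall x eps, 0 < eps ->
     exists delta, 0 < delta /\ forall y, Rabs (y - x) < delta -> d x y < eps) /\
  (forall x y z, x <= y -> y <= z -> Rmax (d x y) (d y z) <= d x z).

Definition open_or_closed_interval (I : R -> Prop) : Prop :=
  (forall x y z, I x -> I z -> x <= y -> y <= z -> I y) /\
  (open_set I \/ closed_set I).

Definition qi_embedding (d : R -> R -> R) (E : R -> Prop) (f : R -> R)
  (M eps : R) : Prop :=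
  forall x y, E x -> E y ->
    / M * d x y - eps <= d (f x) (f y) /\ d (f x) (f y) <= M * d x y + eps.

Definition delta_monotone (d : R -> R -> R) (E : R -> Prop) (f : R -> R)
  (delta : R) : Prop :=
  (forall a b, E a -> E b -> a < b -> d a b > delta -> f a < f b) \/
  (forall a b, E a -> E b -> a < b -> d a b > delta -> f a > f b).

(** The density statement is a coarse intermediate value theorem: at the supremum
    [s] of the points of [[a,b]] where [f] stays below [y], there are points [w]
    arbitrarily close to [s] such that [y] lies between [f s] and [f w]; since [d]
    is orderly, [d y (f s) <= d (f s) (f w)], and the quasi-isometric upper bound
    makes the latter at most [M * d s w + eps], where [d s w] is as small as we
    like by continuity.

    For monotonicity, if [p] is far (more than [2 eps M]) from [q] and [r] lying
    on one side of it, then [f p] cannot lie between [f q] and [f r]: by density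
    some [t] between [q] and [r] has [f t] almost [eps]-close to [f p], while the
    lower quasi-isometric bound keeps [f t] more than [eps] away from [f p].
    Comparing any far pair with a given reversed far pair through a common point
    far to the right of both then shows that all far pairs are reversed. *)

From Stdlib Require Import Reals Lra Classical.
Open Scope R_scope.

Definition between (u y v : R) : Prop := u <= y <= v \/ v <= y <= u.

Lemma between_sym u y v : between u y v -> between v y u.
Proof. unfold between; tauto. Qed.

Lemma between_opp u y v : between (- u) (- y) (- v) -> between u y v.
Proof. unfold between; lra. Qed.

Section OrderlyMetric.

Variable d : R -> R -> R.
Hypothesis d_orderly : orderly d.

Lemma orderly_sym x y : d x y = d y x.
Proof. destruct d_orderly as [[_ [_ [Hsym _]]] _]; apply Hsym. Qed.

Lemma orderly_continuous x e : 0 < e ->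
  exists del, 0 < del /\ forall y, Rabs (y - x) < del -> d x y < e.
Proof. destruct d_orderly as [_ [Hcont _]]; apply Hcont. Qed.

Lemma orderly_le_l x y z : x <= y <= z -> d x y <= d x z.
Proof.
  intros [Hxy Hyz]; destruct d_orderly as [_ [_ Hmax]].
  pose proof (Hmax x y z Hxy Hyz); pose proof (Rmax_l (d x y) (d y z)); lra.
Qed.

Lemma orderly_le_r x y z : x <= y <= z -> d y z <= d x z.
Proof.
  intros [Hxy Hyz]; destruct d_orderly as [_ [_ Hmax]].
  pose proof (Hmax x y z Hxy Hyz); pose proof (Rmax_r (d x y) (d y z)); lra.
Qed.

Lemma orderly_between_le u y v : between u y v -> d u y <= d u v.
Proof.
  intros [Hy | Hy]; [now apply orderly_le_l |].
  rewrite (orderly_sym u y), (orderly_sym u v); now apply orderly_le_r.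
Qed.

Lemma orderly_outside_le p q t : p < q <= t \/ t <= q < p -> d p q <= d p t.
Proof.
  intros [Hq | Hq]; [apply orderly_le_l; lra |].
  rewrite (orderly_sym p q), (orderly_sym p t); apply orderly_le_r; lra.
Qed.

End OrderlyMetric.

Lemma sup_crossing (h : R -> R) a b c : a <= b -> h a <= c <= h b ->
  exists s, a <= s <= b /\ forall del, 0 < del ->
    exists w, a <= w <= b /\ Rabs (w - s) < del /\ between (h s) c (h w).
Proof.
  intros Hab [Ha Hb].
  set (E x := a <= x <= b /\ h x <= c).
  assert (HE : exists x, E x) by (exists a; unfold E; lra).
  assert (Hbound : bound E) by (exists b; now intros x [[_ ?] _]).
  destruct (completeness E Hbound HE) as [s [Hub Hlub]].
  assert (Has : a <= s) by (apply Hub; unfold E; lra).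
  assert (Hsb : s <= b) by (apply Hlub; now intros x [[_ ?] _]).
  exists s; split; [lra |]; intros del Hdel.
  destruct (Rle_dec (h s) c) as [Hs | Hs].
  - set (z := Rmin b (s + del / 2)).
    assert (Hz : s <= z <= b /\ z - s <= del / 2).
    { unfold z, Rmin; destruct (Rle_dec b (s + del / 2)); lra. }
    assert (Hcz : c <= h z).
    { unfold z, Rmin; destruct (Rle_dec b (s + del / 2)); [lra |].
      destruct (Rle_dec (h (s + del / 2)) c) as [Hc | Hc]; [| lra].
      assert (s + del / 2 <= s) by (apply Hub; unfold E; lra); lra. }
    exists z; split; [lra |]; split; [apply Rabs_def1; lra | left; lra].
  - assert (Hx : exists x, E x /\ s - del / 2 < x).
    { apply NNPP; intro Hn.
      assert (s <= s - del / 2); [| lra].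
      apply Hlub; intros x Ex; apply Rnot_lt_le; intro; apply Hn; now exists x. }
    destruct Hx as [x [Ex Hx]]; pose proof (Hub x Ex); destruct Ex.
    exists x; split; [lra |]; split; [apply Rabs_def1; lra | right; lra].
Qed.

Lemma between_crossing (h : R -> R) a b c : a <= b -> between (h a) c (h b) ->
  exists s, a <= s <= b /\ forall del, 0 < del ->
    exists w, a <= w <= b /\ Rabs (w - s) < del /\ between (h s) c (h w).
Proof.
  intros Hab [Hc | Hc]; [now apply sup_crossing |].
  destruct (sup_crossing (fun x => - h x) a b (- c) Hab) as [s [Hs Hw]]; [lra |].
  exists s; split; [exact Hs |]; intros del Hdel.
  destruct (Hw del Hdel) as [w [Hw' [Hsw Hbetw]]].
  exists w; split; [exact Hw' |]; split; [exact Hsw |]; now apply between_opp.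
Qed.

Section CoarseLipschitz.

Variables (d : R -> R -> R) (f : R -> R) (M eps a b : R).
Hypothesis d_orderly : orderly d.
Hypothesis M_pos : 0 < M.
Hypothesis f_lipschitz : forall x y, a <= x <= b -> a <= y <= b ->
  d (f x) (f y) <= M * d x y + eps.

Lemma coarse_lipschitz_dense y eta : a <= b -> between (f a) y (f b) -> eps < eta ->
  exists x, a <= x <= b /\ d y (f x) < eta.
Proof.
  intros Hab Hy Heta.
  destruct (between_crossing f a b y Hab Hy) as [s [Hs Hw]].
  destruct (orderly_continuous d d_orderly s ((eta - eps) / M)) as [del [Hdel Hcont]].
  { apply Rdiv_lt_0_compat; lra. }
  destruct (Hw del Hdel) as [w [Hw' [Hsw Hbetw]]].
  assert (Hdsw : M * d s w < eta - eps).
  { pose proof (Hcont w Hsw) as H.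
    apply (Rmult_lt_compat_l M) in H; [| lra].
    now replace (M * ((eta - eps) / M)) with (eta - eps) in H by (field; lra). }
  exists s; split; [exact Hs |].
  rewrite (orderly_sym d d_orderly).
  pose proof (orderly_between_le d d_orderly _ _ _ Hbetw).
  pose proof (f_lipschitz s w Hs Hw'); lra.
Qed.

End CoarseLipschitz.

Section QuasiIsometry.

Variables (d : R -> R -> R) (I : R -> Prop) (f : R -> R) (M eps : R).
Hypothesis d_orderly : orderly d.
Hypothesis I_convex : forall x y z, I x -> I z -> x <= y -> y <= z -> I y.
Hypothesis M_pos : 0 < M.
Hypothesis f_qi : qi_embedding d I f M eps.

Lemma qi_lipschitz_on a b : I a -> I b -> forall x y, a <= x <= b -> a <= y <= b ->
  d (f x) (f y) <= M * d x y + eps.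
Proof.
  intros Ia Ib x y Hx Hy.
  apply (f_qi x y); [apply (I_convex a x b) | apply (I_convex a y b)]; tauto.
Qed.

Lemma qi_dense a b y eta : I a -> I b -> a <= b -> between (f a) y (f b) -> eps < eta ->
  exists x, a <= x <= b /\ d y (f x) < eta.
Proof.
  intros Ia Ib; apply (coarse_lipschitz_dense d f M eps a b d_orderly M_pos).
  now apply qi_lipschitz_on.
Qed.

Lemma qi_far_not_between_le p q r : I p -> I q -> I r -> q <= r ->
  (p < q \/ r < p) ->
  2 * eps * M < d p q -> 2 * eps * M < d p r -> ~ between (f q) (f p) (f r).
Proof.
  intros Ip Iq Ir Hqr Hside Hpq Hpr Hbetw.
  set (m := Rmin (d p q) (d p r)).
  assert (Hm : 2 * eps * M < m) by (now apply Rmin_glb_lt).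
  assert (Heta : eps < / M * m - eps).
  { apply (Rmult_lt_compat_l (/ M)) in Hm; [| now apply Rinv_0_lt_compat].
    replace (/ M * (2 * eps * M)) with (2 * eps) in Hm by (field; lra); lra. }
  destruct (qi_dense q r (f p) (/ M * m - eps) Iq Ir Hqr Hbetw Heta) as [t [Ht Hpt]].
  assert (Hmt : m <= d p t).
  { destruct Hside as [Hside | Hside].
    - apply (Rle_trans _ (d p q)); [apply Rmin_l |].
      apply (orderly_outside_le d d_orderly); lra.
    - apply (Rle_trans _ (d p r)); [apply Rmin_r |].
      apply (orderly_outside_le d d_orderly); lra. }
  assert (It : I t) by (apply (I_convex q t r); tauto).
  destruct (f_qi p t Ip It) as [Hlow _].
  assert (/ M * m <= / M * d p t).
  { apply Rmult_le_compat_l; [left; now apply Rinv_0_lt_compat | exact Hmt]. }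
  lra.
Qed.

Lemma qi_far_not_between p q r : I p -> I q -> I r ->
  (p < q /\ p < r \/ q < p /\ r < p) ->
  2 * eps * M < d p q -> 2 * eps * M < d p r -> ~ between (f q) (f p) (f r).
Proof.
  intros Ip Iq Ir Hside Hpq Hpr Hbetw.
  destruct (Rle_dec q r).
  - apply (qi_far_not_between_le p q r); auto; lra.
  - apply (qi_far_not_between_le p r q); auto; [lra | lra | now apply between_sym].
Qed.

Lemma qi_far_reversal_propagates a b c e : I a -> I b -> I c -> I e ->
  a < b -> 2 * eps * M < d a b -> f b <= f a ->
  c < e -> 2 * eps * M < d c e -> f e < f c.
Proof.
  intros Ia Ib Ic Ie Hab Dab Hfab Hce Dce.
  set (m := Rmax b e).
  assert (Im : I m) by (unfold m; now apply Rmax_case).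
  assert (Hbm : b <= m) by apply Rmax_l.
  assert (Hem : e <= m) by apply Rmax_r.
  assert (Dam : 2 * eps * M < d a m).
  { pose proof (orderly_outside_le d d_orderly a b m); lra. }
  assert (Dcm : 2 * eps * M < d c m).
  { pose proof (orderly_outside_le d d_orderly c e m); lra. }
  assert (Hma : f m < f a).
  { apply Rnot_le_lt; intro Hle.
    apply (qi_far_not_between a b m); auto; [lra | left; lra]. }
  assert (Hmc : f m < f c).
  { apply Rnot_le_lt; intro Hle.
    apply (qi_far_not_between m c a); auto; [lra | | | left; lra];
      rewrite (orderly_sym d d_orderly); lra. }
  apply Rnot_le_lt; intro Hle.
  apply (qi_far_not_between c m e); auto; [lra | left; lra].
Qed.

Lemma qi_far_monotone : delta_monotone d I f (2 * eps * M).
Proof.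
  destruct (classic (exists a b, I a /\ I b /\ a < b /\ d a b > 2 * eps * M /\ f b <= f a))
    as [[a [b [Ia [Ib [Hab [Dab Hfab]]]]]] | Hnone].
  - right; intros c e Ic Ie Hce Dce.
    now apply (qi_far_reversal_propagates a b c e).
  - left; intros a b Ia Ib Hab Dab.
    apply Rnot_le_lt; intro Hfab; apply Hnone.
    now exists a, b.
Qed.

End QuasiIsometry.

Theorem lemma3p10 (d : R -> R -> R) (I : R -> Prop) (f : R -> R) (M eps : R) :
  orderly d ->
  open_or_closed_interval I ->
  0 < M -> 0 <= eps ->
  qi_embedding d I f M eps ->
  delta_monotone d I f (2 * eps * M) /\
  (forall a b, I a -> I b -> a <= b ->
     forall y, f a <= y -> y <= f b ->
       (* inf_{x in [a,b]} d(y, f x) <= eps *)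
       forall eta, eps < eta -> exists x, a <= x /\ x <= b /\ d y (f x) < eta).
Proof.
  intros Hd [I_convex _] HM _ Hqi.
  split; [now apply qi_far_monotone |].
  intros a b Ia Ib Hab y Hay Hyb eta Heta.
  destruct (qi_dense d I f M eps Hd I_convex HM Hqi a b y eta) as [x [[Hax Hxb] Hx]];
    auto; [left; lra |].
  now exists x.
Qed.
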